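(* Let $\psi$ be an additive character of $\mathbb{F}_{q^2}$ of conductor $q^2$. If $\rho$ is an irreducible representation of $\mathcal U=U_h^{2,q}(\mathbb{F}_{q^2})$ in which $H_{2(h-1)}$ acts by $\psi$ (i.e. $1+a\tau^{2(h-1)}$ acts by the scalar $\psi(a)$), then the restriction of $\rho$ to $H_0'$ contains the character $\widetilde\psi$.
   Context: Let $p$ be a prime, $q$ a power of $p$, $\ell\ne p$, and $h\ge2$ an integer; representations are over $\overline{\mathbb{Q}}_\ell$. For a commutative $\mathbb{F}_q$-algebra $A$, $U_h^{2,q}(A)$ is the set of formal expressions $1+\sum_{i=1}^{2(h-1)}a_i\tau^i$ ($a_i\in A$) with multiplication obtained by extending $(a\tau^i)(b\tau^j)=ab^{q^i}\tau^{i+j}$ bi-additively, $\tau^0=1$, $\tau^k=0$ for $k>2(h-1)$. In $\mathcal U=U_h^{2,q}(\mathbb{F}_{q^2})$ let $H_{2(h-1)}=\{1+a\tau^{2(h-1)}\}$ and $H_0'=\{1+\sum a_i\tau^i: a_i=0\text{ unless } i=2(h-1)\text{ or } i\text{ is odd with } i>h-1\}$. An additive character $\psi\colon\mathbb{F}_{q^2}\to\overline{\mathbb{Q}}_\ell^\times$ has conductor $q^2$ if there exists $x$ with $\psi(x^q)\ne\psi(x)$; $\widetilde\psi$ is the character $1+\sum a_i\tau^i\mapsto\psi(a_{2(h-1)})$ of $H_0'$. *)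

From HB Require Import structures.
From mathcomp Require Import all_boot all_order all_algebra all_field.
Set Implicit Arguments. Unset Strict Implicit. Unset Printing Implicit Defensive.
Import GRing.Theory.
Local Open Scope ring_scope.

(* The group U_h^{2,q}(L), L = F_{q^2}, with N = 2(h-1).  An element
   1 + sum_{i=1}^N a_i tau^i is stored as x : {ffun 'I_N -> L} with
   x k = a_{k+1}. *)
Section U.
Variables (L : finFieldType) (q N : nat).

(* coefficient a_i of tau^i, with a_0 = 1 and a_i = 0 for i > N *)
Definition Ucoef (x : {ffun 'I_N -> L}) (i : nat) : L :=
  if i is j.+1 then (if @insub _ (fun k => k < N)%N 'I_N j is Some k then x k else 0)
  else 1.

(* multiplication extending (a tau^i)(b tau^j) = a b^{q^i} tau^{i+j},
   truncated at tau^N :  c_m = sum_{i=0}^{m} a_i b_{m-i}^{q^i} *)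
Definition Umul (x y : {ffun 'I_N -> L}) : {ffun 'I_N -> L} :=
  [ffun k : 'I_N => \sum_(0 <= i < k.+2) Ucoef x i * Ucoef y (k.+1 - i) ^+ (q ^ i)].

Definition Uone : {ffun 'I_N -> L} := [ffun _ => 0].

Definition Utop (a : L) : {ffun 'I_N -> L} :=
  [ffun k : 'I_N => if k.+1 == N then a else 0].

End U.

Definition inH0' (L : finFieldType) (h : nat) (x : {ffun 'I_(2 * (h - 1)) -> L}) : bool :=
  [forall k : 'I_(2 * (h - 1)),
     (x k != 0) ==> ((k.+1 == 2 * (h - 1))%N || (odd k.+1 && (h - 1 < k.+1)%N))].

Definition is_add_char (L : finFieldType) (F : fieldType) (psi : L -> F) : Prop :=
  psi 0 = 1 /\ forall x y, psi (x + y) = psi x * psi y.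

Definition has_conductor_q2 (L : finFieldType) (F : fieldType) (q : nat) (psi : L -> F) : Prop :=
  exists x : L, psi (x ^+ q) != psi x.

Definition is_rep (T : finType) (mul : T -> T -> T) (one : T) (F : fieldType) (n : nat)
  (rho : T -> 'M[F]_n) : Prop :=
  rho one = 1%:M /\ forall x y, rho (mul x y) = rho x *m rho y.

Definition rep_irreducible (T : finType) (F : fieldType) (n : nat) (rho : T -> 'M[F]_n) : Prop :=
  (0 < n)%N /\
  forall m (U : 'M[F]_(m, n)), (forall x, stablemx U (rho x)) -> U != 0 -> (1%:M <= U)%MS.

(* Write N = 2(h-1), m = h-1, and U^k for the elements with a_1 = ... = a_k = 0.
   By downward induction on k we find v <> 0 on which every x in H_0' /\ U^k acts
   by psi(a_N): for k = N-1 this is the action of H_{2(h-1)}, for k = 0 it is the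
   claim.  Going from U^k down to U^(k-1) is free unless k is odd and k > m, since
   otherwise a_k = 0 on H_0'.  In that case j = N - k is odd and j < m, so 1 + c tau^j
   commutes with U^k and conjugates 1 + a tau^k into (1 + a tau^k)(1 + (c a^q - a c^q) tau^N).
   Hence v rho(1 + c tau^j) sum_a rho(1 + a tau^k), which is fixed by 1 + a tau^k
   (U^m is abelian), is again a psi-eigenvector on H_0' /\ U^(k-1).  It is nonzero for
   some c: for a <> 0 the character c |-> psi(c a^q - a c^q) is nontrivial because psi
   has conductor q^2, so these vectors sum over c to |L| v. *)

From HB Require Import structures.
From mathcomp Require Import all_boot all_order all_algebra all_field.
From mathcomp Require Import zify ring.
Import GRing.Theory.
Local Open Scope ring_scope.
Set Implicit Arguments. Unset Strict Implicit.

Lemma sum_nat_if_eq (R : nmodType) (f : nat -> R) n j :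
  \sum_(0 <= i < n) (if i == j then f i else 0) = if (j < n)%N then f j else 0.
Proof.
case: ltnP => le_nj; last first.
  by rewrite big1_seq // => i; rewrite mem_iota => /andP[_ lt_in]; rewrite ifN //; lia.
rewrite big_mkord (bigD1 (Ordinal le_nj)) //= eqxx big1 ?addr0 // => i ne_ij.
by rewrite ifN //; apply: contra ne_ij => /eqP eq_ij; apply/eqP/val_inj.
Qed.

Lemma sum_add_char_eq0 (V : finZmodType) (R : idomainType) (f : V -> R) c0 :
  {morph f : x y / x + y >-> x * y} -> f c0 != 1 -> \sum_x f x = 0.
Proof.
move=> fD fc0_ne1; set S := \sum_x f x.
have S_eq : S = f c0 * S.
  by rewrite /S [LHS](reindex_inj (addrI c0)) mulr_sumr; apply: eq_bigr => x _; rewrite fD.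
have /eqP : (1 - f c0) * S = 0 by rewrite mulrBl mul1r -S_eq subrr.
by rewrite mulf_eq0 subr_eq0 eq_sym (negbTE fc0_ne1) => /eqP.
Qed.

Section Coefficients.
Variables (L : finFieldType) (q N : nat).

Local Notation U := {ffun 'I_N -> L}.
Local Notation coef := (@Ucoef L N).
Local Notation mul := (@Umul L q N).

Lemma Ucoef_ord x (k : 'I_N) : coef x k.+1 = x k.
Proof.
by rewrite /Ucoef (insubT (fun k => k < N)%N (ltn_ord k)); congr (x _); apply: val_inj.
Qed.

Lemma Ucoef_gt x t : (N < t)%N -> coef x t = 0.
Proof. by case: t => // t Ht; rewrite /Ucoef insubF // ltnNge -ltnS Ht. Qed.

Lemma Ucoef_inj x y : (forall t, (0 < t <= N)%N -> coef x t = coef y t) -> x = y.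
Proof. by move=> Hxy; apply/ffunP => k; rewrite -!Ucoef_ord; apply: Hxy; rewrite /= ltn_ord. Qed.

Lemma Ucoef_mul x y t : (0 < t <= N)%N ->
  coef (mul x y) t = \sum_(0 <= i < t.+1) coef x i * coef y (t - i) ^+ (q ^ i).
Proof.
case: t => // t lt_tN.
by rewrite -[t]/(nat_of_ord (Ordinal (lt_tN : (t < N)%N))) Ucoef_ord ffunE.
Qed.

Definition Uof (f : nat -> L) : U := [ffun k : 'I_N => f k.+1].

Lemma Ucoef_Uof f s : (0 < s <= N)%N -> coef (Uof f) s = f s.
Proof.
case: s => // s lt_sN; have lt_sN' : (s < N)%N by [].
by rewrite -[s]/(nat_of_ord (Ordinal lt_sN')) Ucoef_ord ffunE.
Qed.

(* [Uelem t a] is [1 + a tau^t]; [Utop a] is [Uelem N a] by conversion. *)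
Definition Uelem t (a : L) : U := Uof (fun s => if s == t then a else 0).

Lemma Ucoef_Uelem t a s : (t <= N)%N ->
  coef (Uelem t a) s = if s == 0%N then 1 else if s == t then a else 0.
Proof.
case: s => [|s] // le_tN; case: (ltnP s N) => lt_sN; first by rewrite Ucoef_Uof.
by rewrite Ucoef_gt // ifN //; apply/eqP; lia.
Qed.

Lemma Uelem0 t : Uelem t 0 = Uone L N.
Proof. by apply/ffunP => k; rewrite !ffunE; case: ifP. Qed.

Definition in_Ufil k (x : U) : Prop := forall s, (0 < s <= k)%N -> coef x s = 0.

Lemma in_UfilW k l x : (l <= k)%N -> in_Ufil k x -> in_Ufil l x.
Proof. by move=> le_lk x_k s s_bd; apply: x_k; lia. Qed.

Lemma Uelem_Ufil l t a : (l < t <= N)%N -> in_Ufil l (Uelem t a).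
Proof. by move=> t_bd s s_bd; rewrite Ucoef_Uelem ?ifN //; [apply/eqP | apply/eqP |]; lia. Qed.

Definition Ucut k x := Uof (fun s => if s == k then 0 else coef x s).

Lemma Ucut_Ufil k x : (k <= N)%N -> in_Ufil k.-1 x -> in_Ufil k (Ucut k x).
Proof.
move=> le_kN x_k s s_bd; rewrite Ucoef_Uof; last by lia.
by case: (s =P k) => // ne_sk; apply: x_k; lia.
Qed.

Lemma Ucoef_Ucut_top k x : (k < N)%N -> coef (Ucut k x) N = coef x N.
Proof. by move=> lt_kN; rewrite Ucoef_Uof ?ifN //; [apply/eqP; lia | lia]. Qed.

Hypothesis q_gt0 : (0 < q)%N.

Lemma expr0_qn i : (0 : L) ^+ (q ^ i) = 0.
Proof. by rewrite expr0n expn_eq0 eqn0Ngt q_gt0. Qed.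

Lemma Ucoef_Uelem_mul j c x t : (0 < j <= N)%N -> (t <= N)%N ->
  coef (mul (Uelem j c) x) t
  = coef x t + (if (j <= t)%N then c * coef x (t - j) ^+ (q ^ j) else 0).
Proof.
case: t => [|t] j_bd t_bd; first by rewrite ifN ?addr0 //; lia.
rewrite Ucoef_mul //.
rewrite (eq_bigr (fun i => (if i == 0%N then coef x t.+1 else 0)
           + (if i == j then c * coef x (t.+1 - j) ^+ (q ^ j) else 0))); last first.
  move=> i _; rewrite Ucoef_Uelem; last by lia.
  case: (i =P 0%N) => [->|i_ne0]; first by rewrite ifN ?subn0 ?mul1r ?addr0 //; lia.
  by case: (i =P j) => [->|_]; rewrite ?add0r ?mul0r.
by rewrite big_split /= !sum_nat_if_eq /= ltnS.
Qed.

Lemma Ucoef_mul_Uelem j c y t : (0 < j <= N)%N -> (t <= N)%N ->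
  coef (mul y (Uelem j c)) t
  = coef y t + (if (j <= t)%N then coef y (t - j) * c ^+ (q ^ (t - j)) else 0).
Proof.
case: t => [|t] j_bd t_bd; first by rewrite ifN ?addr0 //; lia.
rewrite Ucoef_mul //.
rewrite (@eq_big_nat _ _ _ 0 t.+2 _ (fun i => (if i == t.+1 then coef y t.+1 else 0)
   + (if i == (t.+1 - j)%N then
        if (j <= t.+1)%N then coef y (t.+1 - j) * c ^+ (q ^ (t.+1 - j)) else 0
      else 0))); last first.
  move=> i /andP[_ lt_it]; rewrite Ucoef_Uelem; last by lia.
  case: (i =P t.+1) => [->|ne_it]; first by rewrite subnn /= expr1n mulr1 ifN ?addr0 //; lia.
  rewrite ifN; last by apply/eqP; lia.
  case: (i =P (t.+1 - j)%N) => [->|ne_ij].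
    case: (leqP j t.+1) => le_jt; first by rewrite ifT ?add0r //; apply/eqP; lia.
    by rewrite ifN ?expr0_qn ?mulr0 ?add0r //; apply/eqP; lia.
  by rewrite ifN ?expr0_qn ?mulr0 ?addr0 //; apply/eqP; lia.
by rewrite big_split /= !sum_nat_if_eq /= ltnS leqnn ifT //; lia.
Qed.

Lemma Ucoef_mul_Utop x b t : (0 < N)%N -> (t <= N)%N ->
  coef (mul x (Uelem N b)) t = coef x t + (if t == N then b else 0).
Proof.
move=> N_gt0 t_bd; rewrite Ucoef_mul_Uelem ?N_gt0 ?leqnn //.
case: (t =P N) => [->|ne_tN]; first by rewrite leqnn subnn expn0 expr1 mul1r.
by rewrite ifN ?addr0 // -ltnNge ltn_neqAle t_bd andbT; apply/eqP.
Qed.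

Lemma UmulIr : left_injective mul.
Proof.
move=> g y1 y2 /= eq_mul; apply: Ucoef_inj => t /andP[_].
elim: t {-2}t (leqnn t) => [|t IH] s le_st le_sN; first by have -> : s = 0%N by lia.
case: (leqP s t) => [le_st'|lt_ts]; first exact: IH.
have -> : s = t.+1 by lia.
have t_bd : (0 < t.+1 <= N)%N by lia.
move: (Ucoef_mul y1 g t_bd); rewrite eq_mul Ucoef_mul //.
rewrite !(big_nat_recr t.+1) //= !subnn !expr1n !mulr1.
rewrite (@eq_big_nat _ _ _ 0 t.+1 (fun i => coef y1 i * coef g (t.+1 - i) ^+ (q ^ i))
  (fun i => coef y2 i * coef g (t.+1 - i) ^+ (q ^ i))); first by move/addrI.
by move=> i lt_it; rewrite IH //; lia.
Qed.

Lemma Uelem_comm_Ufil j c x : (0 < j <= N)%N -> in_Ufil (N - j) x ->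
  mul (Uelem j c) x = mul x (Uelem j c).
Proof.
move=> j_bd x_Nj; apply: Ucoef_inj => t t_bd.
rewrite Ucoef_Uelem_mul ?Ucoef_mul_Uelem //; try lia.
case: (leqP j t) => // le_jt; case: (t =P j) => [->|ne_tj].
  by rewrite subnn expr1n mulr1 expn0 expr1 mul1r.
by rewrite (x_Nj (t - j)%N) ?expr0_qn ?mulr0 ?mul0r //; lia.
Qed.

Section Abelian.
Variable m : nat.
Hypothesis le_N_2m : (N <= m + m)%N.

(* Two factors in U^m cannot both contribute to a term of degree at most 2m. *)
Lemma Ucoef_mul_Ufil x y t : in_Ufil m x -> in_Ufil m y -> (0 < t <= N)%N ->
  coef (mul x y) t = coef x t + coef y t.
Proof.
move=> x_m y_m t_bd; rewrite Ucoef_mul // big_ltn // big_nat_recr /=; last by lia.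
rewrite big1_seq ?add0r ?subn0 ?mul1r ?subnn ?expr1n ?mulr1 1?addrC //.
move=> i; rewrite mem_iota => /andP[i_gt0 lt_it].
case: (leqP i m) => le_im; first by rewrite x_m ?mul0r //; lia.
by rewrite y_m ?expr0_qn ?mulr0 //; lia.
Qed.

Lemma Umul_Ufil_comm x y : in_Ufil m x -> in_Ufil m y -> mul x y = mul y x.
Proof.
by move=> x_m y_m; apply: Ucoef_inj => t t_bd; rewrite !Ucoef_mul_Ufil // addrC.
Qed.

Lemma Uelem_mul_Ufil k a b : (m < k <= N)%N ->
  mul (Uelem k a) (Uelem k b) = Uelem k (a + b).
Proof.
move=> k_bd; apply: Ucoef_inj => -[//|t] t_bd.
rewrite Ucoef_mul_Ufil //; try exact: Uelem_Ufil.
rewrite !Ucoef_Uelem /=; try lia.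
by case: (t.+1 =P k); rewrite ?addr0.
Qed.

Lemma Umul_Uelem_Ucut k x : (m < k <= N)%N -> in_Ufil k.-1 x ->
  x = mul (Uelem k (coef x k)) (Ucut k x).
Proof.
move=> k_bd x_k; apply: Ucoef_inj => t t_bd.
have cut_m : in_Ufil m (Ucut k x) by apply: (in_UfilW _ (Ucut_Ufil _ x_k)); lia.
rewrite (Ucoef_mul_Ufil (Uelem_Ufil _ k_bd) cut_m t_bd) Ucoef_Uelem; last by lia.
rewrite Ucoef_Uof // (@ifN _ (t == 0%N)); last by lia.
by case: (t =P k) => [->|_]; rewrite ?addr0 ?add0r.
Qed.

End Abelian.

End Coefficients.

Ltac decide_ifs := repeat match goal with
  | |- context [if ?b then _ else _] =>
      first [ rewrite (_ : b = true); last by lia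
            | rewrite (_ : b = false); last by lia ]
  end.

Section FiniteField.
Variables (L : finFieldType) (q : nat).
Hypothesis card_L : #|L| = (q ^ 2)%N.

Lemma card_q_gt0 : (0 < q)%N.
Proof.
have : (0 < #|L|)%N by apply/card_gt0P; exists 0.
by rewrite card_L; case: (q).
Qed.

Lemma exprqD (x y : L) : (x + y) ^+ q = x ^+ q + y ^+ q.
Proof.
have [p _ p_char] := finPcharP L.
apply: exprDn_pchar; suff: [pchar L].-nat (q ^ 2)%N by rewrite pnatX orbF.
rewrite -card_L (card_pprimeChar p_char) pnatX.
by rewrite pnatE ?p_char // (pcharf_prime p_char).
Qed.

Lemma expr_qn_odd s (x : L) : odd s -> x ^+ (q ^ s) = x ^+ q.
Proof.
move=> odd_s; rewrite -[s]odd_double_half odd_s add1n.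
elim: s./2 => [|r IHr]; first by rewrite expn1.
have -> : (q ^ (r.+1).*2.+1 = q ^ r.*2.+1 * q ^ 2)%N by rewrite -expnD; congr (q ^ _)%N; lia.
by rewrite exprM IHr -card_L expf_card.
Qed.

Definition Ucomm (c a : L) := c * a ^+ q - a * c ^+ q.

Lemma UcommDl c c' a : Ucomm (c + c') a = Ucomm c a + Ucomm c' a.
Proof. by rewrite /Ucomm exprqD; ring. Qed.

Lemma Uelem_commutator N j k c a :
    (0 < j)%N -> (0 < k)%N -> (j + k = N)%N -> j != k -> odd j -> odd k ->
  Umul q (Uelem N j c) (Uelem N k a)
  = Umul q (Umul q (Uelem N k a) (Uelem N N (Ucomm c a))) (Uelem N j c).
Proof.
move=> j_gt0 k_gt0 jk_N ne_jk odd_j odd_k.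
have q_gt0 := card_q_gt0.
apply: Ucoef_inj => t t_bd.
rewrite Ucoef_Uelem_mul; try lia.
rewrite Ucoef_mul_Uelem; try lia.
rewrite !Ucoef_mul_Utop; try lia.
rewrite !Ucoef_Uelem; try lia.
have [le_jt|lt_tj] := leqP j t; last by decide_ifs; ring.
have [->|ne_tN] := eqVneq t N.
  have -> : (N - j = k)%N by lia.
  by decide_ifs; rewrite /Ucomm !expr_qn_odd //; ring.
have [->|ne_tj] := eqVneq t j; first by decide_ifs; rewrite subnn expr1 expr1n; ring.
by decide_ifs; rewrite expr0_qn //; ring.
Qed.

End FiniteField.

Section Representation.
Variables (L : finFieldType) (q h : nat).
Hypothesis card_L : #|L| = (q ^ 2)%N.

Local Notation N := (2 * (h - 1))%N.
Local Notation m := (h - 1)%N.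
Local Notation U := {ffun 'I_N -> L}.
Local Notation coef := (@Ucoef L N).
Local Notation mul := (@Umul L q N).
Local Notation Uelem := (@Uelem L N).
Local Notation inH0' := (@inH0' L h).

Variables (F : fieldType) (psi : L -> F).
Hypotheses (psi0 : psi 0 = 1) (psiD : {morph psi : x y / x + y >-> x * y}).
Variables (n : nat) (rho : U -> 'M[F]_n).
Hypotheses (rho1 : rho (Uone L N) = 1%:M) (rhoM : {morph rho : x y / mul x y >-> x *m y}).
Hypothesis rho_top : forall a, rho (Uelem N a) = (psi a)%:M.

Let q_gt0 : (0 < q)%N := card_q_gt0 card_L.

Lemma rho_unitmx g : rho g \in unitmx.
Proof.
have [inv_g _ inv_gK] := injF_bij (@UmulIr _ _ _ q_gt0 g).
have /mulmx1_unit[] // : rho (inv_g (Uone L N)) *m rho g = 1%:M.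
by rewrite -rhoM (inv_gK (Uone L N)).
Qed.

Definition has_psi_vector k := exists2 v : 'rV[F]_n, v != 0 &
  forall x, inH0' x -> in_Ufil k x -> v *m rho x = psi (coef x N) *: v.

Lemma inH0'_coef x t : inH0' x -> (0 < t <= N)%N -> coef x t != 0 ->
  (t == N) || odd t && (m < t)%N.
Proof.
case: t => // t x_H0 t_bd; have lt_tN : (t < N)%N by lia.
by rewrite -[t]/(nat_of_ord (Ordinal lt_tN)) Ucoef_ord => /(implyP (forallP x_H0 _)).
Qed.

Lemma inH0'_Ucut k x : inH0' x -> inH0' (Ucut k x).
Proof.
move=> x_H0; apply/forallP => i; apply/implyP.
rewrite -Ucoef_ord Ucoef_Uof; last by rewrite /= ltn_ord.
case: (i.+1 =P k) => _; first by rewrite eqxx.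
by apply: inH0'_coef; rewrite //= ltn_ord.
Qed.

Lemma has_psi_vector_top : (0 < n)%N -> has_psi_vector N.-1.
Proof.
move=> n_gt0; exists (const_mx 1).
  by apply/eqP => /rowP/(_ (Ordinal n_gt0)); rewrite !mxE; apply/eqP/oner_neq0.
move=> x _ x_top; have x_eq : x = Uelem N (coef x N).
  apply: Ucoef_inj => t t_bd; rewrite Ucoef_Uof //.
  by case: (t =P N) => [->|ne_tN] //; apply: x_top; lia.
by rewrite {1}x_eq rho_top mul_mx_scalar.
Qed.

Lemma has_psi_vector_even k : (k.+1 < N)%N -> ~~ (odd k.+1 && (m < k.+1)%N) ->
  has_psi_vector k.+1 -> has_psi_vector k.
Proof.
move=> lt_kN not_odd [v v_ne0 v_eig]; exists v => // x x_H0 x_k.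
apply: v_eig => // s s_bd; have [le_sk|lt_ks] := leqP s k; first by apply: x_k; lia.
have -> : s = k.+1 by lia.
apply: contraNeq not_odd => /(inH0'_coef x_H0) /=.
by rewrite (_ : k.+1 == N = false) //; lia.
Qed.

Section Conductor.
Variables (x0 : L) (psi_x0 : psi (x0 ^+ q) != psi x0).

Lemma sum_psi_Ucomm a : \sum_c psi (Ucomm q c a) = if a == 0 then #|L|%:R else 0.
Proof.
have [->|a_ne0] := eqVneq a 0.
  rewrite (eq_bigr (fun _ => 1)) ?sumr_const // => c _.
  by rewrite /Ucomm expr0n eqn0Ngt q_gt0 mulr0 mul0r subrr psi0.
have Ucomm_x0 : Ucomm q ((x0 / a) ^+ q) a = x0 ^+ q - x0.
  rewrite /Ucomm -exprMn divfK // -exprM mulnn -card_L expf_card.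
  by rewrite mulrC divfK.
apply: (@sum_add_char_eq0 _ _ _ ((x0 / a) ^+ q)).
  by move=> c c'; rewrite /= (UcommDl card_L) psiD.
rewrite /= Ucomm_x0; apply: contra psi_x0 => /eqP psi_eq1.
by rewrite -{1}(subrK x0 (x0 ^+ q)) psiD psi_eq1 mul1r.
Qed.

Section OddStep.
Hypothesis charF0 : [pchar F] =i pred0.
Variable k : nat.
Hypotheses (lt_mk : (m < k)%N) (lt_kN : (k < N)%N) (odd_k : odd k).

Local Notation j := (N - k)%N.
Let le_N_2m : (N <= m + m)%N. Proof. by lia. Qed.
Let k_bd : (m < k <= N)%N. Proof. by lia. Qed.

Let avg := \sum_a rho (Uelem k a).
Let twist c := \sum_a psi (Ucomm q c a) *: rho (Uelem k a).

Lemma twist_intertwine c : rho (Uelem j c) *m avg = twist c *m rho (Uelem j c).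
Proof.
rewrite mulmx_sumr mulmx_suml; apply: eq_bigr => a _.
have odd_j : odd j by rewrite oddN ?odd_mul //; lia.
rewrite -rhoM (@Uelem_commutator _ _ card_L N j k) //; try by [lia | apply/eqP; lia].
by rewrite !rhoM rho_top mul_mx_scalar.
Qed.

Lemma sum_twist (v : 'rV_n) : \sum_c v *m twist c = #|L|%:R *: v.
Proof.
under eq_bigr do rewrite mulmx_sumr.
rewrite exchange_big /=.
under eq_bigr do rewrite -(eq_bigr _ (fun c _ => scalemxAr _ _ _)) -scaler_suml sum_psi_Ucomm.
rewrite (bigD1 0) //= eqxx big1 => [|a /negbTE->]; last by rewrite scale0r.
by rewrite Uelem0 rho1 mulmx1 addr0.
Qed.

Lemma twist_neq0 (v : 'rV_n) : v != 0 -> exists c, v *m twist c != 0.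
Proof.
move=> v_ne0; have [c|all0] := pickP (fun c => v *m twist c != 0); first by exists c.
have /eqP : #|L|%:R *: v = 0 by rewrite -sum_twist big1 // => c _; apply/eqP/negbFE/all0.
rewrite scaler_eq0 (negbTE v_ne0) orbF.
by move/pcharf0P: charF0 => ->; rewrite card_L expn_eq0 eqn0Ngt q_gt0.
Qed.

Lemma avg_Uelem a : avg *m rho (Uelem k a) = avg.
Proof.
rewrite /avg mulmx_suml [RHS](reindex_inj (addIr a)) /=.
by apply: eq_bigr => b _; rewrite -rhoM (Uelem_mul_Ufil q_gt0 le_N_2m).
Qed.

Lemma avg_comm x : in_Ufil k x -> avg *m rho x = rho x *m avg.
Proof.
move=> x_k; rewrite mulmx_suml mulmx_sumr; apply: eq_bigr => a _.
have x_m : in_Ufil m x by apply: in_UfilW x_k; lia.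
by rewrite -!rhoM (Umul_Ufil_comm q_gt0 le_N_2m (Uelem_Ufil _ k_bd) x_m).
Qed.

Lemma has_psi_vector_odd : has_psi_vector k -> has_psi_vector k.-1.
Proof.
case=> v v_ne0 v_eig; have [c vc_ne0] := twist_neq0 v_ne0.
exists (v *m rho (Uelem j c) *m avg).
  rewrite -mulmxA twist_intertwine mulmxA; apply: contra vc_ne0 => /eqP w0.
  by rewrite -(mulmxK (rho_unitmx (Uelem j c)) (v *m twist c)) w0 mul0mx.
move=> x x_H0 x_k1.
have cut_k : in_Ufil k (Ucut k x) := Ucut_Ufil (ltnW lt_kN) x_k1.
have cut_eig := v_eig _ (inH0'_Ucut k x_H0) cut_k.
rewrite {1}(Umul_Uelem_Ucut q_gt0 le_N_2m k_bd x_k1) rhoM.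
rewrite mulmxA -[_ *m avg *m _]mulmxA avg_Uelem -mulmxA avg_comm // mulmxA.
rewrite -[v *m _ *m rho (Ucut k x)]mulmxA -rhoM Uelem_comm_Ufil ?subKn //; try lia.
by rewrite rhoM mulmxA cut_eig Ucoef_Ucut_top // -!scalemxAl.
Qed.

End OddStep.

Lemma has_psi_vector0 : [pchar F] =i pred0 -> (0 < n)%N -> has_psi_vector 0.
Proof.
move=> charF0 n_gt0.
suff down d : has_psi_vector (N.-1 - d) by rewrite -(subnn N.-1); apply: down.
elim: d => [|d IHd]; first by rewrite subn0; apply: has_psi_vector_top.
have [le_Nd|lt_dN] := leqP N.-1 d; first by rewrite (_ : N.-1 - d.+1 = N.-1 - d)%N //; lia.
move: IHd; set k := (N.-1 - d.+1)%N; rewrite (_ : N.-1 - d = k.+1)%N; last by lia.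
case odd_k1: (odd k.+1 && (m < k.+1)%N).
  by case/andP: odd_k1 => odd_k lt_mk; apply: has_psi_vector_odd; rewrite //; lia.
by apply: has_psi_vector_even; rewrite ?odd_k1 //; lia.
Qed.

End Conductor.

End Representation.

Theorem lemma2p2
  (F : closedFieldType) (charF0 : [pchar F] =i pred0)
  (L : finFieldType) (q : nat) (hL : #|L| = (q ^ 2)%N)
  (h : nat) (hh : (2 <= h)%N)
  (psi : L -> F) (psi_add : is_add_char psi) (psi_cond : has_conductor_q2 q psi)
  (n : nat) (rho : {ffun 'I_(2 * (h - 1)) -> L} -> 'M[F]_n)
  (rho_rep : is_rep (@Umul L q (2 * (h - 1))) (@Uone L (2 * (h - 1))) rho)
  (rho_irr : rep_irreducible rho)
  (rho_top : forall a : L, rho (@Utop L (2 * (h - 1)) a) = (psi a)%:M) :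
  exists2 v : 'rV[F]_n, v != 0 &
    forall x, inH0' x -> v *m rho x = psi (Ucoef x (2 * (h - 1))) *: v.
Proof.
case: psi_add => psi0 psiD; case: psi_cond => x0 psi_x0.
case: rho_rep => rho1 rhoM; case: rho_irr => n_gt0 _.
have [v v_ne0 v_eig] := has_psi_vector0 hL psi0 psiD rho1 rhoM rho_top psi_x0 charF0 n_gt0.
by exists v => // x x_H0; apply: v_eig => // s; lia.
Qed.
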